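(* Let $m\ge 2$, $n\ge 3$, let $\mathcal{C}^3_{m,n}=(V_1,V_2,E)$, and let $e\in E$ be a hyperedge containing exactly one vertex of $V_1$ and two vertices of $V_2$. Then the Seidel spectrum of $\mathcal{C}^3_{m,n}-e$ consists of the eigenvalue $2n-1$ with multiplicity $m-2$, the eigenvalue $2m-1$ with multiplicity $n-3$, and the five roots $\rho_1,\dots,\rho_5$ of $\xi_1(\rho)=0$, where \begin{align*} \xi_1(\rho)={}&-\rho^5+(-5+7m+5n-4mn)\rho^4\\ &+(46+4m-18m^2+4n-22mn+2m^2n+4m^3n-8n^2-6mn^2+4m^2n^2+4mn^3)\rho^3\\ &+(286-234m-46m^2+36m^3-206n+62mn-10m^2n+52m^3n-16m^4n+8n^2-10mn^2\\ &\quad+64m^2n^2-24m^3n^2+4n^3+40mn^3-24m^2n^3-8mn^4)\rho^2\\ &+(83+76m-366m^2+248m^3-40m^4-228n-90mn+238m^2n+20m^3n-88m^4n+16m^5n\\ &\quad-40n^2+246mn^2+132m^2n^2-184m^3n^2+48m^4n^2+40n^3-28mn^3-160m^2n^3\\ &\quad+48m^3n^3-16mn^4+32m^2n^4)\rho\\ &+(-921+2387m-2322m^2+1012m^3-168m^4+873n-2250mn+1994m^2n-732m^3n\\ &\quad+72m^4n+16m^5n-408n^2+1274mn^2-680m^2n^2-160m^3n^2+160m^4n^2-32m^5n^2\\ &\quad+84n^3-368mn^3+40m^2n^3+160m^3n^3-32m^4n^3+24mn^4+32m^2n^4-32m^3n^4). \end{align*}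
   Context: For a hypergraph $\mathcal{H}$ and distinct vertices $i,j$, the co-degree $c_{ij}$ is the number of hyperedges containing both $i$ and $j$. The Seidel matrix $\mathcal{S}(\mathcal{H})$ has zero diagonal and $(i,j)$-entry $1-2c_{ij}$ for $i\neq j$; its eigenvalues (with multiplicity) form the Seidel spectrum of $\mathcal{H}$. The complete $3$-uniform bipartite hypergraph $\mathcal{C}^3_{m,n}=(V_1,V_2,E)$ has vertex set $V_1\sqcup V_2$, $|V_1|=m$, $|V_2|=n$, and $E$ = all $3$-subsets meeting both $V_1$ and $V_2$. For a hyperedge $e$, $\mathcal{H}-e$ denotes the hypergraph with the same vertex set and hyperedge set $E\setminus\{e\}$. *)

From HB Require Import structures.
From mathcomp Require Import all_boot all_order all_algebra.
Set Implicit Arguments. Unset Strict Implicit. Unset Printing Implicit Defensive.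
Import Order.TTheory GRing.Theory Num.Theory.
Local Open Scope ring_scope.

Definition codegree (N : nat) (E : {set {set 'I_N}}) (i j : 'I_N) : nat :=
  #|[set f in E | (i \in f) && (j \in f)]|.

Definition seidel_mx (R : nzRingType) (N : nat) (E : {set {set 'I_N}}) : 'M[R]_N :=
  \matrix_(i, j) (if i == j then 0 else 1 - 2 * (codegree E i j)%:R).

(* s (a list, read as a multiset) is the Seidel spectrum of the hypergraph:
   the eigenvalues with (algebraic) multiplicity, i.e. the roots of the
   characteristic polynomial of the Seidel matrix. *)
Definition is_seidel_spectrum (R : comNzRingType) (N : nat)
  (E : {set {set 'I_N}}) (s : seq R) : Prop :=
  char_poly (seidel_mx R E) = \prod_(x <- s) ('X - x%:P).

Definition part1 (m n : nat) : {set 'I_(m + n)} := [set i : 'I_(m + n) | (i < m)%N].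
Definition part2 (m n : nat) : {set 'I_(m + n)} := [set i : 'I_(m + n) | (m <= i)%N].

Definition C3_edges (m n : nat) : {set {set 'I_(m + n)}} :=
  [set f : {set 'I_(m + n)} | [&& #|f| == 3,
      f :&: part1 m n != set0 & f :&: part2 m n != set0]].

Definition del_edge (N : nat) (E : {set {set 'I_N}}) (e : {set 'I_N}) :=
  E :\ e.

Definition xi1 (R : nzRingType) (m n : nat) : {poly R} :=
  let M : int := m%:Z in let N : int := n%:Z in
  let c4 : int := -5 + 7*M + 5*N - 4*M*N in
  let c3 : int := 46 + 4*M - 18*M^+2 + 4*N - 22*M*N + 2*M^+2*N + 4*M^+3*N
      - 8*N^+2 - 6*M*N^+2 + 4*M^+2*N^+2 + 4*M*N^+3 in
  let c2 : int := 286 - 234*M - 46*M^+2 + 36*M^+3 - 206*N + 62*M*N - 10*M^+2*N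
      + 52*M^+3*N - 16*M^+4*N + 8*N^+2 - 10*M*N^+2
      + 64*M^+2*N^+2 - 24*M^+3*N^+2 + 4*N^+3 + 40*M*N^+3 - 24*M^+2*N^+3 - 8*M*N^+4 in
  let c1 : int := 83 + 76*M - 366*M^+2 + 248*M^+3 - 40*M^+4 - 228*N - 90*M*N
      + 238*M^+2*N + 20*M^+3*N - 88*M^+4*N + 16*M^+5*N
      - 40*N^+2 + 246*M*N^+2 + 132*M^+2*N^+2 - 184*M^+3*N^+2 + 48*M^+4*N^+2
      + 40*N^+3 - 28*M*N^+3 - 160*M^+2*N^+3
      + 48*M^+3*N^+3 - 16*M*N^+4 + 32*M^+2*N^+4 in
  let c0 : int := -921 + 2387*M - 2322*M^+2 + 1012*M^+3 - 168*M^+4 + 873*N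
      - 2250*M*N + 1994*M^+2*N - 732*M^+3*N
      + 72*M^+4*N + 16*M^+5*N - 408*N^+2 + 1274*M*N^+2 - 680*M^+2*N^+2
      - 160*M^+3*N^+2 + 160*M^+4*N^+2 - 32*M^+5*N^+2
      + 84*N^+3 - 368*M*N^+3 + 40*M^+2*N^+3 + 160*M^+3*N^+3 - 32*M^+4*N^+3
      + 24*M*N^+4 + 32*M^+2*N^+4 - 32*M^+3*N^+4 in
  - 'X^5 + (c4%:~R)%:P * 'X^4 + (c3%:~R)%:P * 'X^3 + (c2%:~R)%:P * 'X^2
    + (c1%:~R)%:P * 'X + (c0%:~R)%:P.

From HB Require Import structures.
From mathcomp Require Import all_boot all_order all_algebra.
From mathcomp Require Import ring zify.
Import Order.TTheory GRing.Theory Num.Theory.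
Set Implicit Arguments. Unset Strict Implicit. Unset Printing Implicit Defensive.

(* Off the diagonal, the Seidel matrix S of C^3_{m,n} - e only depends on which
   of the four classes V1 :&: e, V1 :\: e, V2 :&: e, V2 :\: e (of sizes 1, m - 1,
   2, n - 2) its two vertices lie in: the co-degree of i and j in C^3_{m,n} is
   n, m or m + n - 2 according as both, none or one of them lie in V1, minus 1
   when both lie in e.  Writing g_kl for the off-diagonal entry between classes
   k and l and d_k = x + g_kk, the matrix xI - S equals D (I - A B) with
   D = diag(d_(class i)) and A B factoring through the four classes, so
   det (I - A B) = det (I - B A) turns det (xI - S) into a 4 x 4 determinant
   times powers of the d_k; expanding that determinant gives the quintic.  As
   both sides are polynomials, it suffices to check this at the infinitely many
   integers x where no d_k vanishes. *)

Section ThreeUniform.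
Variable T : finType.

Lemma cards3_eq3 (i j k : T) :
  (#|[set i; j; k]| == 3) = [&& i != j, i != k & j != k].
Proof.
rewrite setUC cardsU1 cards2 !inE negb_or ![k == _]eq_sym.
by case: (i != j); case: (i != k); case: (j != k).
Qed.

Lemma setI3_neq0 (A : {set T}) (i j k : T) :
  ([set i; j; k] :&: A != set0) = [|| i \in A, j \in A | k \in A].
Proof.
apply/set0Pn/idP => [[x]|].
  by rewrite !inE => /andP [/orP [/orP [] | ] /eqP -> ->]; rewrite ?orbT.
by case/or3P => h; [exists i | exists j | exists k]; rewrite !inE eqxx h ?orbT.
Qed.

Lemma cardsTD2 (i j : T) : i != j -> #|[set: T] :\ i :\ j| = (#|T| - 2)%N.
Proof.
move=> neq_ij; have := cardsD1 i [set: T]; have := cardsD1 j ([set: T] :\ i).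
by rewrite !inE eq_sym neq_ij cardsT /= !add1n => -> ->; rewrite subSS subn1.
Qed.

Definition third_vertices (E : {set {set T}}) (i j : T) : {set T} :=
  [set k | [&& k != i, k != j & [set i; j; k] \in E]].

Lemma card_edges_through (E : {set {set T}}) (i j : T) :
  {in E, forall f : {set T}, #|f| = 3} -> i != j ->
  #|[set f in E | (i \in f) && (j \in f)]| = #|third_vertices E i j|.
Proof.
move=> E3 neq_ij.
have -> : [set f in E | (i \in f) && (j \in f)] =
          (fun k => [set i; j; k]) @: third_vertices E i j.
  apply/setP => f; rewrite inE; apply/andP/imsetP => [[Ef /andP [fi fj]]|[k]].
    have /cards1P [k fk] : #|f :\ i :\ j| == 1.
      have := E3 f Ef; rewrite (cardsD1 i) fi (cardsD1 j) !inE eq_sym neq_ij fj.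
      by rewrite !add1n => -[->].
    have : k \in f :\ i :\ j by rewrite fk set11.
    rewrite !inE => /and3P [kj ki kf].
    have def_f : f = [set i; j; k].
      apply/setP => y; rewrite !inE.
      case: (eqVneq y i) => [->|yi] //; case: (eqVneq y j) => [->|yj] //=.
      by move: (congr1 (fun A : {set T} => y \in A) fk); rewrite !inE yi yj.
    by exists k; rewrite // inE ki kj -def_f.
  by rewrite inE => /and3P [ki kj Ek] ->; rewrite Ek !inE !eqxx ?orbT.
rewrite card_in_imset // => k l; rewrite !inE => /and3P [ki kj _] _ eq_kl.
have : k \in [set i; j; l] by rewrite -eq_kl !inE eqxx orbT.
by rewrite !inE (negPf ki) (negPf kj) => /eqP.
Qed.

End ThreeUniform.

Lemma codegree_del_edge N (E : {set {set 'I_N}}) (e : {set 'I_N}) (i j : 'I_N) :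
  e \in E -> codegree (del_edge E e) i j = (codegree E i j - ((i \in e) && (j \in e)))%N.
Proof.
move=> Ee; rewrite /codegree /del_edge.
have -> : [set f in E :\ e | (i \in f) && (j \in f)] =
          [set f in E | (i \in f) && (j \in f)] :\ e.
  by apply/setP => f; rewrite !inE -andbA.
by rewrite [X in (X - _)%N](cardsD1 e) !inE Ee addKn.
Qed.

Section CompleteBipartite.
Variables m n : nat.
Local Notation V := 'I_(m + n).

Lemma card_part1 : #|part1 m n| = m.
Proof.
have -> : part1 m n = lshift n @: [set: 'I_m].
  apply/setP => i; rewrite inE; apply/idP/imsetP => [lt_im | [k _ ->]] /=.
    by exists (Ordinal lt_im); [rewrite inE | exact: val_inj].
  exact: (ltn_ord k).
by rewrite card_imset ?cardsT ?card_ord //; exact: lshift_inj.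
Qed.

Lemma card_part2 : #|part2 m n| = n.
Proof.
have -> : part2 m n = @rshift m n @: [set: 'I_n].
  apply/setP => i; rewrite inE; apply/idP/imsetP => [le_mi | [k _ ->]] /=.
    have lt_imn : (i - m < n)%N by rewrite ltn_subLR // ltn_ord.
    by exists (Ordinal lt_imn); [rewrite inE | apply: val_inj; rewrite /= subnKC].
  exact: leq_addr.
by rewrite card_imset ?cardsT ?card_ord //; exact: rshift_inj.
Qed.

Lemma mem_third_C3 (i j k : V) : i != j ->
  (k \in third_vertices (C3_edges m n) i j) =
  [&& k != i, k != j, [|| i < m, j < m | k < m] & [|| m <= i, m <= j | m <= k]]%N.
Proof.
move=> neq_ij; rewrite !inE cards3_eq3 !setI3_neq0 !inE neq_ij ![_ == k]eq_sym.
by case: (k != i); case: (k != j).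
Qed.

Definition bipartite_codegree (in1_i in1_j : bool) : nat :=
  if in1_i && in1_j then n else if ~~ in1_i && ~~ in1_j then m else (m + n - 2)%N.

Lemma codegree_C3_edges (i j : V) : i != j ->
  codegree (C3_edges m n) i j = bipartite_codegree (i < m)%N (j < m)%N.
Proof.
move=> neq_ij; rewrite /codegree card_edges_through //; last first.
  by move=> f; rewrite inE => /andP [/eqP].
rewrite /bipartite_codegree; case: (ltnP i m) => hi; case: (ltnP j m) => hj /=.
2,3: rewrite -[in RHS](card_ord (m + n)) -(cardsTD2 neq_ij); apply: eq_card => k;
  by rewrite mem_third_C3 // !inE hi hj /= ?orbT; case: (k != i); case: (k != j).
- rewrite -[RHS]card_part2; apply: eq_card => k; rewrite mem_third_C3 // inE -!val_eqE /=.
  case: (ltnP k m) => hk; rewrite ?orbT ?orbF /=; [lia|].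
  by apply/and3P; split; [apply/eqP; lia | apply/eqP; lia | lia].
- rewrite -[RHS]card_part1; apply: eq_card => k; rewrite mem_third_C3 // inE -!val_eqE /=.
  case: (ltnP k m) => hk; rewrite ?orbT ?orbF /=; [|lia].
  by apply/and3P; split; [apply/eqP; lia | apply/eqP; lia | lia].
Qed.

End CompleteBipartite.

Definition class_size N p (t : 'I_N -> 'I_p) (l : nat) : nat :=
  #|[set i | t i == l :> nat]|.

Section DeletedEdge.
Variables (m n : nat) (e : {set 'I_(m + n)}).

(* Class 2 [i \notin V1] + [i \notin e]: 0, 1, 2, 3 stand for V1 :&: e, V1 :\: e,
   V2 :&: e, V2 :\: e; classes are compared as nats since matrix entries below
   are functions of nat indices, which lets 4 x 4 determinants compute. *)
Definition vclass (i : 'I_(m + n)) : 'I_4 := inord ((~~ (i < m)%N).*2 + (i \notin e)).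

Lemma vclass_val i : vclass i = ((~~ (i < m)%N).*2 + (i \notin e))%N :> nat.
Proof. by rewrite inordK //; case: (i < m)%N; case: (i \in e). Qed.

Lemma vclass_lt2 i : (vclass i < 2)%N = (i < m)%N.
Proof. by rewrite vclass_val; case: (i < m)%N; case: (i \in e). Qed.

Lemma odd_vclass i : odd (vclass i) = (i \notin e).
Proof. by rewrite vclass_val oddD odd_double oddb. Qed.

Definition class_codegree (k l : nat) : nat :=
  (bipartite_codegree m n (k < 2) (l < 2) - (~~ odd k && ~~ odd l))%N.

Hypothesis he : e \in C3_edges m n.

Lemma codegree_C3_del_edge (i j : 'I_(m + n)) : i != j ->
  codegree (del_edge (C3_edges m n) e) i j = class_codegree (vclass i) (vclass j).
Proof.
move=> neq_ij; rewrite codegree_del_edge // codegree_C3_edges //.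
by rewrite /class_codegree !vclass_lt2 !odd_vclass !negbK.
Qed.

Hypotheses (he1 : #|e :&: part1 m n| = 1%N) (he2 : #|e :&: part2 m n| = 2%N).

Lemma class_size_vclass :
  [/\ class_size vclass 0 = 1, class_size vclass 1 = (m - 1)%N,
      class_size vclass 2 = 2 & class_size vclass 3 = (n - 2)%N].
Proof.
have class_sizeE k (A : {set 'I_(m + n)}) :
    (forall i, (vclass i == k :> nat) = (i \in A)) -> class_size vclass k = #|A|.
  by move=> memA; apply: eq_card => i; rewrite inE memA.
split.
- rewrite (class_sizeE 0 (e :&: part1 m n)) // => i.
  by rewrite !inE vclass_val; case: (i < m)%N; case: (i \in e).
- rewrite (class_sizeE 1 (part1 m n :\: e)) => [|i].
    by rewrite cardsD setIC he1 card_part1.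
  by rewrite !inE vclass_val; case: (i < m)%N; case: (i \in e).
- rewrite (class_sizeE 2 (e :&: part2 m n)) // => i.
  by rewrite !inE vclass_val (leqNgt m); case: (i < m)%N; case: (i \in e).
- rewrite (class_sizeE 3 (part2 m n :\: e)) => [|i].
    by rewrite cardsD setIC he2 card_part2.
  by rewrite !inE vclass_val (leqNgt m); case: (i < m)%N; case: (i \in e).
Qed.
End DeletedEdge.

Local Open Scope ring_scope.

Lemma det1_sub_mulmxC (R : comNzRingType) p q (A : 'M[R]_(p, q)) (B : 'M[R]_(q, p)) :
  \det (1%:M - A *m B) = \det (1%:M - B *m A).
Proof.
have E1 : block_mx 1%:M A B 1%:M =
          block_mx 1%:M 0 B 1%:M *m block_mx 1%:M A 0 (1%:M - B *m A).
  by rewrite mulmx_block !mul1mx !mul0mx !mulmx1 !addr0 addrC subrK.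
have E2 : block_mx 1%:M A B 1%:M =
          block_mx (1%:M - A *m B) A 0 1%:M *m block_mx 1%:M 0 B 1%:M.
  by rewrite mulmx_block !mul1mx !mul0mx !mulmx1 mulmx0 !add0r subrK.
have := congr1 determinant E1.
by rewrite E2 !det_mulmx !det_lblock !det_ublock !det1 !mul1r !mulr1.
Qed.

Lemma expand_det_row0 (R : comNzRingType) n (A : 'M[R]_n.+1) :
  \det A = \sum_(j < n.+1)
    (-1) ^+ j * A ord0 j * \det (\matrix_(a, b) A (lift ord0 a) (lift j b)).
Proof.
rewrite (expand_det_row _ ord0); apply: eq_bigr => j _.
rewrite /cofactor add0n mulrCA mulrA; congr (_ * \det _).
by apply/matrixP => a b; rewrite !mxE.
Qed.

Section ClassMatrix.
Variables (R : fieldType) (N p : nat) (t : 'I_N -> 'I_p).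
Variables (G : nat -> nat -> R) (d : nat -> R).
Hypothesis d_neq0 : forall k : 'I_p, d k != 0.

Lemma sum_indicator_class (l : nat) (c : R) :
  \sum_i (t i == l :> nat)%:R * c = (class_size t l)%:R * c.
Proof.
rewrite (eq_bigr (fun i => if i \in [set i | t i == l :> nat] then c else 0)).
  by rewrite -big_mkcond /= sumr_const mulr_natl.
by move=> i _; rewrite inE; case: (_ == _); rewrite ?mul1r ?mul0r.
Qed.

Lemma det_class_mx :
  \det (\matrix_(i, j) ((i == j)%:R * d (t i) - G (t i) (t j))) * \prod_(k < p) d k
  = \prod_(k < p) d k ^+ class_size t k *
    \det (\matrix_(k < p, l < p) ((k == l)%:R * d k - G k l * (class_size t l)%:R)).
Proof.
pose A := \matrix_(i < N, l < p) ((t i == l :> nat)%:R / d l).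
pose B := \matrix_(k < p, j < N) G k (t j).
have E1 : \matrix_(i, j) ((i == j)%:R * d (t i) - G (t i) (t j)) =
          diag_mx (\row_i d (t i)) *m (1%:M - A *m B).
  apply/matrixP => i j; rewrite mul_diag_mx !mxE.
  rewrite (bigD1 (t i)) //= big1 => [|l /negPf neq_l]; last first.
    by rewrite !mxE (inj_eq val_inj) eq_sym neq_l !mul0r.
  rewrite !mxE eqxx mul1r addr0 mulrBr mulrC; congr (_ - _).
  by rewrite mulrA divff ?mul1r.
have E2 : (1%:M - B *m A) *m diag_mx (\row_(k < p) d k) =
   \matrix_(k < p, l < p) ((k == l :> nat)%:R * d k - G k l * (class_size t l)%:R).
  apply/matrixP => k l; rewrite mul_mx_diag !mxE.
  rewrite (eq_bigr (fun i => (t i == l :> nat)%:R * (G k l / d l))); last first.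
    move=> i _; rewrite !mxE; case: eqP => [->|_].
      by rewrite mulr1n mul1r mulrA mul1r.
    by rewrite mulr0n !mul0r mulr0.
  rewrite sum_indicator_class mulrBl; congr (_ - _).
    by case: (eqVneq k l) => [->|/negPf]; rewrite ?eqxx // (inj_eq val_inj) => ->; rewrite !mul0r.
  by rewrite mulrCA -!mulrA mulVf ?mulr1 // mulrC.
have E3 : \prod_(i < N) d (t i) = \prod_(k < p) d k ^+ class_size t k.
  rewrite (partition_big t predT) //=; apply: eq_bigr => k _.
  rewrite (eq_bigr (fun _ => d k)) => [|i /eqP -> //].
  rewrite prodr_const /class_size; congr (_ ^+ _); apply: eq_card => i.
  by rewrite inE (inj_eq val_inj).
rewrite E1 det_mulmx det_diag det1_sub_mulmxC.
rewrite (eq_bigr (fun i => d (t i))) => [|i _]; last by rewrite mxE.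
rewrite E3 -mulrA; congr (_ * _).
rewrite -E2 det_mulmx det_diag; congr (_ * _).
by apply: eq_bigr => k _; rewrite mxE.
Qed.

End ClassMatrix.

Lemma horner_char_poly_class_mx (R : comNzRingType) N p (t : 'I_N -> 'I_p)
    (G : nat -> nat -> R) (x : R) :
  (char_poly (\matrix_(i, j) (if i == j then 0 else G (t i) (t j)))).[x] =
  \det (\matrix_(i, j) ((i == j)%:R * (x + G (t i) (t i)) - G (t i) (t j))).
Proof.
rewrite /char_poly -horner_evalE -det_map_mx; congr (\det _).
apply/matrixP => i j; rewrite !mxE.
by case: eqVneq => [->|_] /=; rewrite /horner_eval !hornerE ?mul1r ?addrK ?subr0 ?mul0r ?sub0r.
Qed.

Lemma eq_poly_natr (R : numDomainType) (p q : {poly R}) (c : nat) :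
  (forall k, p.[(k + c)%:R] = q.[(k + c)%:R]) -> p = q.
Proof.
move=> eq_pq; apply/eqP; rewrite -subr_eq0; apply/eqP.
apply: (@roots_geq_poly_eq0 _ _ [seq (k + c)%:R | k <- iota 0 (size (p - q))]).
- by apply/allP => _ /mapP [k _ ->]; rewrite /root hornerD hornerN eq_pq subrr.
- by rewrite map_inj_uniq ?iota_uniq // => a b /eqP; rewrite eqr_nat eqn_add2r => /eqP.
- by rewrite size_map size_iota.
Qed.

Section Spectrum.
Variables (m n : nat) (e : {set 'I_(m + n)}).
Hypotheses (hm : (2 <= m)%N) (hn : (3 <= n)%N) (he : e \in C3_edges m n).
Hypotheses (he1 : #|e :&: part1 m n| = 1%N) (he2 : #|e :&: part2 m n| = 2%N).

Lemma seidel_mx_del_edge (R : nzRingType) :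
  seidel_mx R (del_edge (C3_edges m n) e) =
  \matrix_(i, j)
    (if i == j then 0 else 1 - 2 * (class_codegree m n (vclass e i) (vclass e j))%:R).
Proof.
by apply/matrixP => i j; rewrite !mxE; case: eqVneq => // /(codegree_C3_del_edge he) ->.
Qed.

Lemma natr_class_codegree (R : nzRingType) (k l : nat) :
  (class_codegree m n k l)%:R =
  (if (k < 2)%N && (l < 2)%N then n%:R else if ~~ (k < 2)%N && ~~ (l < 2)%N then m%:R
   else m%:R + n%:R - 2) - (~~ odd k && ~~ odd l)%:R :> R.
Proof.
rewrite /class_codegree /bipartite_codegree natrB; last first.
  by case: ifP => _; [|case: ifP => _]; case: (_ && _); lia.
by case: ifP => _; [|case: ifP => _] => //; rewrite natrB ?natrD //; lia.
Qed.

Lemma horner_char_poly_seidel_del_edge (R : fieldType) (x : R) :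
  x != 2 * n%:R - 3 -> x != 2 * n%:R - 1 -> x != 2 * m%:R - 3 -> x != 2 * m%:R - 1 ->
  (char_poly (seidel_mx R (del_edge (C3_edges m n) e))).[x] =
  (x - (2 * n%:R - 1)) ^+ (m - 2) * (x - (2 * m%:R - 1)) ^+ (n - 3) * - (xi1 R m n).[x].
Proof.
rewrite -![x == _]subr_eq0 => hd0 hd1 hd2 hd3.
pose G (k l : nat) : R := 1 - 2 * (class_codegree m n k l)%:R.
pose d (k : nat) : R := x + G k k.
have d_neq0 (k : 'I_4) : d k != 0.
  case: k => [[|[|[|[|k]]]] //= _]; rewrite /d /G natr_class_codegree /=.
  - by rewrite (_ : _ + _ = x - (2 * n%:R - 3)) //; ring.
  - by rewrite (_ : _ + _ = x - (2 * n%:R - 1)) //; ring.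
  - by rewrite (_ : _ + _ = x - (2 * m%:R - 3)) //; ring.
  - by rewrite (_ : _ + _ = x - (2 * m%:R - 1)) //; ring.
have := det_class_mx (vclass e) G d_neq0.
rewrite -horner_char_poly_class_mx -seidel_mx_del_edge //.
have prod_neq0 : \prod_(k < 4) d k != 0 by apply/prodf_neq0 => k _.
move=> char_poly_class; apply: (mulIf prod_neq0); rewrite {}char_poly_class.
rewrite /xi1; cbv zeta; rewrite !(hornerD, hornerN, hornerX, hornerC, hornerM, hornerXn).
rewrite !(expand_det_row0, big_ord_recl, big_ord0, det_mx00) !mxE /= /bump /=.
rewrite !(add0n, addn0, add1n) expr0 !mulr1.
have [-> -> -> ->] := class_size_vclass he1 he2.
have d1E : d 1%N = x - (2 * n%:R - 1) by rewrite /d /G natr_class_codegree /=; ring.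
have d3E : d 3%N = x - (2 * m%:R - 1) by rewrite /d /G natr_class_codegree /=; ring.
have m1R : (m - 1)%:R = m%:R - 1 :> R by rewrite natrB //; lia.
have n2R : (n - 2)%:R = n%:R - 2 :> R by rewrite natrB //; lia.
have [m1E n2E] : (m - 1 = (m - 2).+1)%N /\ (n - 2 = (n - 3).+1)%N by lia.
rewrite m1R n2R m1E n2E !exprS d1E d3E.
move: (_ ^+ (m - 2)) (_ ^+ (n - 3)) => A B.
rewrite /d /G !natr_class_codegree /=.
ring.
Qed.

End Spectrum.

Theorem theorem2p6 (R : numClosedFieldType) (m n : nat)
  (hm : (2 <= m)%N) (hn : (3 <= n)%N)
  (e : {set 'I_(m + n)}) (he : e \in C3_edges m n)
  (he1 : #|e :&: part1 m n| = 1%N) (he2 : #|e :&: part2 m n| = 2%N)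
  (rho : seq R) (hrho : xi1 R m n = - \prod_(r <- rho) ('X - r%:P)) :
  is_seidel_spectrum (del_edge (C3_edges m n) e)
    (nseq (m - 2) (2 * n%:R - 1) ++ nseq (n - 3) (2 * m%:R - 1) ++ rho).
Proof.
rewrite /is_seidel_spectrum !big_cat /= !big_nseq !iter_mulr_1.
rewrite -[\prod_(r <- rho) _]opprK -hrho.
apply: (eq_poly_natr (c := 2 * (m + n))) => k.
have point_neq (a b : nat) : (a <= m + n)%N -> (0 < b)%N ->
    ((k + 2 * (m + n))%:R : R) != 2 * a%:R - b%:R.
  move=> le_a b_gt0; rewrite -subr_eq0 (_ : _ - _ = (k + 2 * (m + n) + b - 2 * a)%:R).
    by rewrite pnatr_eq0 -lt0n; lia.
  by rewrite natrB ?natrD ?natrM; [ring | lia].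
rewrite (horner_char_poly_seidel_del_edge hm hn he he1 he2).
- by rewrite !hornerM hornerN !horner_exp !hornerXsubC mulrA.
- exact: (point_neq n 3%N (leq_addl m n) isT).
- exact: (point_neq n 1%N (leq_addl m n) isT).
- exact: (point_neq m 3%N (leq_addr n m) isT).
- exact: (point_neq m 1%N (leq_addr n m) isT).
Qed.
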